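(* Let $F$ be a field without maximal subrings and $D$ a non-commutative division ring with center $F$. If $R$ is a maximal subring of $D$, then $F\subseteq R$.
   Context: All rings are associative unital and subrings share the identity. A maximal subring of a ring $T$ is a proper subring maximal under inclusion among proper subrings of $T$. *)

From mathcomp Require Import all_boot all_algebra.
Set Implicit Arguments. Unset Strict Implicit. Unset Printing Implicit Defensive.
Import GRing.Theory.
Local Open Scope ring_scope.

Definition is_subring (T : unitRingType) (S : T -> Prop) : Prop :=
  [/\ S 1, (forall x y, S x -> S y -> S (x - y))
    & (forall x y, S x -> S y -> S (x * y))].

Definition center (T : unitRingType) : T -> Prop :=
  fun x => forall y : T, x * y = y * x.

(* D is a division ring: every nonzero element is a unit
   (a unitRingType is already nontrivial, 1 != 0). *)
Definition is_division_ring (T : unitRingType) : Prop :=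
  forall x : T, x != 0 -> x \is a GRing.unit.

Definition maximal_subring_of (T : unitRingType) (A S : T -> Prop) : Prop :=
  [/\ is_subring S,
      (forall x, S x -> A x),
      (exists x, A x /\ ~ S x)
    & (forall S' : T -> Prop, is_subring S' ->
         (forall x, S x -> S' x) ->
         (forall x, S' x -> A x) ->
         (exists x, A x /\ ~ S' x) ->
         forall x, S' x -> S x)].

(** Let [F] be the center of [D].  For every [z ∈ F \ R] we show that [F] is
    contained in [(R ∩ F)[z]]; hence if [F ⊄ R], then [R ∩ F] is a maximal
    subring of [F].

    Maximality of [R] gives [R[z] = D].  If [z⁻¹ ∈ R], every central [f] is
    [(f z⁻ⁿ) zⁿ] with [f z⁻ⁿ ∈ R ∩ F].  Otherwise also [R[z⁻¹] = D], so [z] is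
    integral over [R] and [D = R + zR + ... + z^(N-1)R] with [N] minimal.
    Minimality, together with the invertibility of the nonzero elements of [R],
    makes [1, z, ..., z^(N-1)] independent over [R]; comparing coefficients in
    [r f = f r] then shows that a central [f] has central coefficients. *)
From Stdlib Require Import Classical Wf_nat.
From mathcomp Require Import all_boot all_algebra.
Set Implicit Arguments. Unset Strict Implicit. Unset Printing Implicit Defensive.
Import GRing.Theory.
Local Open Scope ring_scope.

Section Subring.
Variables (T : unitRingType) (S : T -> Prop).
Hypothesis hS : is_subring S.

Lemma subring1 : S 1. Proof. by case: hS. Qed.

Lemma subringB x y : S x -> S y -> S (x - y). Proof. by case: hS => _ + _; apply. Qed.

Lemma subringM x y : S x -> S y -> S (x * y). Proof. by case: hS => _ _; apply. Qed.

Lemma subring0 : S 0. Proof. by rewrite -(subrr 1); apply: subringB; apply: subring1. Qed.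

Lemma subringN x : S x -> S (- x).
Proof. by move=> Sx; rewrite -sub0r; apply: subringB Sx; apply: subring0. Qed.

Lemma subringD x y : S x -> S y -> S (x + y).
Proof. by move=> Sx Sy; rewrite -(opprK y); apply: subringB Sx (subringN Sy). Qed.

End Subring.

Lemma subringI (T : unitRingType) (S S' : T -> Prop) :
  is_subring S -> is_subring S' -> is_subring (fun x => S x /\ S' x).
Proof.
move=> hS hS'; split; first by split; apply: subring1.
- by move=> x y [Sx S'x] [Sy S'y]; split; apply: subringB.
- by move=> x y [Sx S'x] [Sy S'y]; split; apply: subringM.
Qed.

Lemma center_subring (T : unitRingType) : is_subring (@center T).
Proof.
split; first by move=> y; rewrite mul1r mulr1.
- by move=> x y hx hy z; rewrite mulrBl mulrBr hx hy.
- by move=> x y hx hy z; rewrite -mulrA hy mulrA hx mulrA.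
Qed.

Lemma centerX (T : unitRingType) (z : T) n : center z -> center (z ^+ n).
Proof. by move=> hz y; apply/commr_sym/commrX/commr_sym; rewrite /GRing.comm hz. Qed.

Lemma centerV (T : unitRingType) (z : T) : center z -> center z^-1.
Proof. by move=> hz y; apply/commr_sym/commrV/commr_sym; rewrite /GRing.comm hz. Qed.

Lemma maximal_subring_full (T : unitRingType) (R Q : T -> Prop) :
  maximal_subring_of (fun _ => True) R -> is_subring Q -> (forall x, R x -> Q x) ->
  forall s, Q s -> ~ R s -> forall x, Q x.
Proof.
case=> _ _ _ Rmax hQ RQ s Qs nRs x; apply: NNPP => nQx.
by apply: nRs; apply: (Rmax Q hQ RQ) => //; exists x.
Qed.

(* [pow_span R z n] is [R + z R + ... + z^(n-1) R], in Horner form. *)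
Fixpoint pow_span (T : unitRingType) (R : T -> Prop) (z : T) (n : nat) : T -> Prop :=
  if n is n'.+1 then fun d => exists r d', [/\ R r, pow_span R z n' d' & d = r + z * d']
  else fun d => d = 0.

Section PowSpan.
Variables (T : unitRingType) (R : T -> Prop) (z : T).
Hypothesis hR : is_subring R.
Hypothesis hz : center z.
Local Notation span := (pow_span R z).

Lemma pow_span0 n : span n 0.
Proof.
elim: n => [|n IH] //=; exists 0, 0.
by split=> //; [apply: subring0 | rewrite mulr0 addr0].
Qed.

Lemma pow_spanS n d : span n d -> span n.+1 d.
Proof.
elim: n d => [|n IH] d /=.
  by move=> ->; exists 0, 0; split=> //; [apply: subring0 | rewrite mulr0 addr0].
by case=> r [d' [Rr hd' ->]]; exists r, d'; split=> //; apply: IH.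
Qed.

Lemma pow_span_le n m d : (n <= m)%N -> span n d -> span m d.
Proof.
move=> /subnK <-; elim: (m - n)%N => [|k IH] hd; first by rewrite add0n.
by rewrite addSn; apply/pow_spanS/IH.
Qed.

Lemma pow_spanB n a b : span n a -> span n b -> span n (a - b).
Proof.
elim: n a b => [|n IH] a b /=; first by move=> -> ->; rewrite subr0.
case=> r [a' [Rr ha ->]] [r' [b' [Rr' hb ->]]].
exists (r - r'), (a' - b'); split; [exact: subringB | exact: IH |].
by rewrite mulrBr opprD addrACA.
Qed.

Lemma pow_spanD n a b : span n a -> span n b -> span n (a + b).
Proof.
move=> ha hb; rewrite -(opprK b) -(sub0r b).
by apply/pow_spanB/pow_spanB => //; apply: pow_span0.
Qed.

Lemma pow_span_const n r : R r -> span n.+1 r.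
Proof.
by move=> Rr; exists r, 0; split=> //; [apply: pow_span0 | rewrite mulr0 addr0].
Qed.

Lemma pow_spanMz n d : span n d -> span n.+1 (z * d).
Proof. by move=> hd; exists 0, d; split=> //; [apply: subring0 | rewrite add0r]. Qed.

Lemma pow_spanXz n k d : span n d -> span (n + k) (z ^+ k * d).
Proof.
move=> hd; elim: k => [|k IH]; first by rewrite addn0 expr0 mul1r.
by rewrite addnS exprS -mulrA; apply: pow_spanMz.
Qed.

Lemma pow_spanMr n r d : R r -> span n d -> span n (d * r).
Proof.
move=> Rr; elim: n d => [|n IH] d /=; first by move=> ->; rewrite mul0r.
case=> r0 [d' [Rr0 hd ->]]; exists (r0 * r), (d' * r).
by split; [exact: subringM | exact: IH | rewrite mulrDl mulrA].
Qed.

Lemma pow_spanMl n r d : R r -> span n d -> span n (r * d).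
Proof.
move=> Rr; elim: n d => [|n IH] d /=; first by move=> ->; rewrite mulr0.
case=> r0 [d' [Rr0 hd ->]]; exists (r * r0), (r * d').
by split; [exact: subringM | exact: IH | rewrite mulrDr mulrA -hz mulrA].
Qed.

Lemma pow_spanM n m a b : span n a -> span m b -> span (n + m) (a * b).
Proof.
elim: n a => [|n IH] a; first by move=> /= -> _; rewrite mul0r; apply: pow_span0.
case=> r [a' [Rr ha ->]] hb; rewrite mulrDl -mulrA addSn.
apply: pow_spanD; last exact/pow_spanMz/IH.
by apply: pow_span_le (pow_spanMl Rr hb); rewrite leqW // leq_addl.
Qed.

Lemma pow_span_monomial n a : R a -> span n.+1 (a * z ^+ n).
Proof.
by move=> Ra; have := pow_spanXz n (pow_span_const 0 Ra); rewrite add1n centerX.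
Qed.

Lemma pow_span_split n d :
  span n.+1 d -> exists p a, [/\ span n p, R a & d = p + a * z ^+ n].
Proof.
elim: n d => [|n IH] d /=.
  by case=> r [d' [Rr -> ->]]; exists 0, r; rewrite mulr0 addr0 add0r expr0 mulr1.
case=> r [d' [Rr /IH [p [a [hp Ra ->]]] ->]].
exists (r + z * p), a; split=> //; first by exists r, p; split.
by rewrite mulrDr addrA exprS mulrA (hz a) -mulrA.
Qed.

Lemma pow_span_subring : is_subring (fun d => exists n, span n d).
Proof.
split; first by exists 1%N; apply: pow_span_const; apply: subring1.
- move=> x y [n hx] [m hy]; exists (maxn n m).
  by apply: pow_spanB; [apply: pow_span_le hx | apply: pow_span_le hy];
    rewrite ?leq_maxl ?leq_maxr.
- by move=> x y [n hx] [m hy]; exists (n + m)%N; apply: pow_spanM.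
Qed.

Lemma pow_span_full :
  maximal_subring_of (fun _ => True) R -> ~ R z -> forall d, exists n, span n d.
Proof.
move=> Rmax nRz; apply: (maximal_subring_full Rmax pow_span_subring) nRz.
- by move=> x Rx; exists 1%N; apply: pow_span_const.
- by exists 2%N; have := pow_spanMz (pow_span_const 0 (subring1 hR)); rewrite mulr1.
Qed.

(* Once [z^N] lies in [span N], so does [z * span N]. *)
Lemma pow_span_stable N m d : span N (z ^+ N) -> span m d -> span N d.
Proof.
move=> hN; elim: m d => [|m IH] d /=; first by move=> ->; apply: pow_span0.
case=> r [d' [Rr /IH hd' ->]]; apply: pow_spanD.
  apply: pow_span_le (pow_span_const 0 Rr).
  by case: (N) hN => // /eqP; rewrite expr0 oner_eq0.
have [p [a [hp Ra ->]]] := pow_span_split (pow_spanMz hd').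
by apply: pow_spanD => //; apply: pow_spanMl.
Qed.

Lemma pow_span_sub n d : R z -> span n d -> R d.
Proof.
move=> Rz; elim: n d => [|n IH] d /=; first by move=> ->; apply: subring0.
by case=> r [d' [Rr /IH Rd' ->]]; exact: (subringD hR Rr (subringM hR Rz Rd')).
Qed.

Lemma pow_span_min (S : T -> Prop) n d :
  is_subring S -> (forall r, R r -> S r) -> S z -> span n d -> S d.
Proof.
move=> hS RS Sz; elim: n d => [|n IH] d /=; first by move=> ->; apply: subring0.
by case=> r [d' [Rr /IH Sd' ->]]; exact: (subringD hS (RS r Rr) (subringM hS Sz Sd')).
Qed.

Lemma pow_span_comm n a d :
  (forall r, R r -> a * r = r * a) -> span n d -> a * d = d * a.
Proof.
move=> aR; elim: n d => [|n IH] d /=; first by move=> ->; rewrite mulr0 mul0r.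
case=> r [d' [Rr hd ->]].
by rewrite mulrDr mulrDl aR // mulrA -hz -mulrA IH // mulrA.
Qed.

Lemma pow_span_lower k b : R b -> span k (b * z ^+ k) ->
  forall m d, span (k + m) d -> span k (b ^+ m * d).
Proof.
move=> Rb hbk; have lower i d : span (k + i).+1 d -> span (k + i) (b * d).
  case/pow_span_split => p [a [hp Ra ->]]; rewrite mulrDr.
  apply: pow_spanD; first exact: pow_spanMl.
  have -> : b * (a * z ^+ (k + i)) = z ^+ i * (b * z ^+ k * a).
    by rewrite exprD (centerX i hz) -!mulrA !(mulrA a) -(centerX k hz a) !mulrA.
  exact/pow_spanXz/pow_spanMr.
elim=> [|m IH] d hd; first by rewrite expr0 mul1r; rewrite addn0 in hd.
by rewrite exprSr -mulrA; apply/IH/lower; rewrite -addnS.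
Qed.

End PowSpan.

Lemma pow_span_inv (T : unitRingType) (R : T -> Prop) (z w : T) n d :
  is_subring R -> center z -> center w -> z * w = 1 ->
  pow_span R z n d -> pow_span R w n.+1 (d * w ^+ n).
Proof.
move=> hR hz hw zw; elim: n d => [|n IH] d.
  by move=> d0; rewrite (d0 : d = 0) mul0r; apply: pow_span0.
case=> r [d' [Rr /IH hd ->]].
have -> : (r + z * d') * w ^+ n.+1 = r * w ^+ n.+1 + d' * w ^+ n.
  by rewrite mulrDl exprS (hz d') -!mulrA (mulrA z) zw mul1r.
by apply: pow_spanD => //; [apply: pow_span_monomial | apply: pow_spanS].
Qed.

Section MinimalRank.
Variables (T : unitRingType) (R : T -> Prop) (z : T) (N : nat).
Hypothesis division : is_division_ring T.
Hypothesis hR : is_subring R.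
Hypothesis hz : center z.
Hypothesis span_full : forall d, pow_span R z N d.
Hypothesis span_minimal : forall k, pow_span R z k (z ^+ k) -> (N <= k)%N.

Lemma pow_span_indep k b : (k < N)%N -> R b -> pow_span R z k (b * z ^+ k) -> b = 0.
Proof.
(* Otherwise [z^k = b^(N-k) (b^-(N-k) z^k)] would lie in [pow_span R z k]. *)
move=> ltkN Rb hbk; apply: NNPP => /eqP b_neq0.
have bmU : b ^+ (N - k) \is a GRing.unit by apply/unitrX/division.
have := span_full ((b ^+ (N - k))^-1 * z ^+ k).
rewrite -{1}(subnKC (ltnW ltkN)) => /(pow_span_lower hR hz Rb hbk).
by rewrite mulrA mulrV // mul1r => /span_minimal; rewrite leqNgt ltkN.
Qed.

Lemma center_lead_coef m p a :
  (m < N)%N -> pow_span R z m p -> R a -> center (p + a * z ^+ m) -> center a.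
Proof.
move=> ltmN hp Ra hc; have aR r : R r -> a * r = r * a.
  move=> Rr; apply/eqP; rewrite eq_sym -subr_eq0; apply/eqP.
  apply: (pow_span_indep ltmN).
    exact: (subringB hR (subringM hR Rr Ra) (subringM hR Ra Rr)).
  have := hc r; rewrite mulrDl mulrDr -mulrA (centerX m hz r) !mulrA => e.
  have -> : (r * a - a * r) * z ^+ m = p * r - r * p.
    rewrite mulrBl; have -> : r * a * z ^+ m = p * r + a * r * z ^+ m - r * p.
      by rewrite e addrAC subrr add0r.
    by rewrite addrAC addrK.
  exact: (pow_spanB hR (pow_spanMr hR Rr hp) (pow_spanMl hR hz Rr hp)).
by move=> y; exact: (pow_span_comm hz aR (span_full y)).
Qed.

Lemma center_pow_span m d : (m <= N)%N -> pow_span R z m d -> center d ->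
  pow_span (fun c => center c /\ R c) z m d.
Proof.
elim: m d => [|m IH] d // lemN /(pow_span_split hz) [p [a [hp Ra ->]]] hc.
have ca : center a := center_lead_coef lemN hp Ra hc.
have cp : center p.
  rewrite -(addrK (a * z ^+ m) p).
  exact: (subringB (center_subring T) hc (subringM (center_subring T) ca (centerX m hz))).
have hRF := subringI (center_subring T) hR.
apply: pow_spanD => //; first exact/pow_spanS/IH/cp/hp/ltnW.
exact: pow_span_monomial.
Qed.

End MinimalRank.

Lemma pow_span_finite_rank (T : unitRingType) (R : T -> Prop) (z : T) :
  maximal_subring_of (fun _ => True) R -> center z -> z \is a GRing.unit ->
  ~ R z -> ~ R z^-1 ->
  exists N, (forall d, pow_span R z N d) /\
            (forall k, pow_span R z k (z ^+ k) -> (N <= k)%N).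
Proof.
move=> Rmax hz zU nRz nRzi; have hR : is_subring R by case: Rmax.
have [k hk] := pow_span_full hR (centerV hz) Rmax nRzi z.
have hex : exists N, pow_span R z N (z ^+ N).
  exists k.+1; rewrite exprS.
  exact: (pow_span_inv hR (centerV hz) hz (mulVr zU) hk).
have [N [[hN Nmin] _]] :=
  @dec_inh_nat_subset_has_unique_least_element _ (fun n => classic _) hex.
exists N; split; last by move=> j /Nmin /leP.
by move=> d; have [m hm] := pow_span_full hR hz Rmax nRz d; apply: pow_span_stable hm.
Qed.

Lemma center_sub_pow_span (T : unitRingType) (R : T -> Prop) (z : T) :
  is_division_ring T -> maximal_subring_of (fun _ => True) R -> center z -> ~ R z ->
  forall f, center f -> exists n, pow_span (fun c => center c /\ R c) z n f.
Proof.
move=> division Rmax hz nRz f hf; have hR : is_subring R by case: Rmax.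
have hRF := subringI (center_subring T) hR.
have zU : z \is a GRing.unit.
  by apply/division/eqP => z0; apply: nRz; rewrite z0; apply: subring0.
have [Rzi | nRzi] := classic (R z^-1).
  have [n hn] := pow_span_full hR hz Rmax nRz f.
  have Rc : R (f * z^-1 ^+ n).
    exact: (pow_span_sub hR Rzi (pow_span_inv hR hz (centerV hz) (mulrV zU) hn)).
  have cc : center (f * z^-1 ^+ n).
    exact: (subringM (center_subring T) hf (centerX n (centerV hz))).
  have -> : f = f * z^-1 ^+ n * z ^+ n.
    by rewrite -mulrA -exprMn_comm ?mulVr ?expr1n ?mulr1 // /GRing.comm hz.
  by exists n.+1; apply: pow_span_monomial.
have [N [span_full span_minimal]] := pow_span_finite_rank Rmax hz zU nRz nRzi.
by exists N; apply: (center_pow_span division hR hz span_full span_minimal (leqnn N)).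
Qed.

Theorem corollary2p8 (D : unitRingType) :
  is_division_ring D ->
  (exists x y : D, x * y != y * x) ->
  (* the field F := center D has no maximal subrings *)
  (forall S : D -> Prop, ~ maximal_subring_of (@center D) S) ->
  forall R : D -> Prop,
    maximal_subring_of (fun _ => True) R ->
    forall x : D, @center D x -> R x.
Proof.
move=> division _ noFmax R Rmax x Fx; apply: NNPP => nRx.
have hR : is_subring R by case: Rmax.
apply: (noFmax (fun c => center c /\ R c)); split.
- exact: (subringI (center_subring D) hR).
- by move=> c [].
- by exists x; split=> // -[].
move=> S hS RFS SF [y [Fy nSy]] z Sz; split; first exact: SF.
apply: NNPP => nRz; apply: nSy.
have [n hn] := center_sub_pow_span division Rmax (SF z Sz) nRz Fy.
exact: (pow_span_min hS RFS Sz hn).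
Qed.
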